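(* Let $p$ be a prime and $n\ge1$. Let $N_n=\prod_{1\le h\le k\le n,\ \gcd(h,k)=1} h$ be the product of the numerators of all nonzero Farey fractions of order $n$ (each written in lowest terms). Then $$\mathrm{ord}_p(N_n)=\sum_{b=1}^{\lfloor\log_p n\rfloor}\ \sum_{a=1}^{\lfloor n/p^b\rfloor}\left(\varphi(ap^b)\Big(\Big\lfloor\frac{n}{ap^b}\Big\rfloor-1\Big)+\sum_{j\mid ap}\mu(j)\Big\lfloor\frac{d}{j}\Big\rfloor\right),$$ where, for each pair $(a,b)$, $d$ is the unique integer with $0\le d<ap^b$ and $d\equiv n\pmod{ap^b}$.
   Context: $\mathrm{ord}_p(m)$ is the exponent of the prime $p$ in the positive integer $m$; $\varphi$ is Euler's totient function, $\mu$ the M\''obius function, and the inner sum is over positive divisors $j$ of $ap$. *)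

From mathcomp Require Import all_boot all_order all_algebra.
Set Implicit Arguments. Unset Strict Implicit. Unset Printing Implicit Defensive.
Import Order.TTheory GRing.Theory Num.Theory.

(* Moebius function: mu 0 = 0 (convention, never used); for n > 0,
   mu n = (-1)^(number of prime factors) if n is squarefree, 0 otherwise. *)
Definition moebius (n : nat) : int :=
  if (0 < n)%N && all (fun q => logn q n == 1%N) (primes n)
  then ((-1) ^+ size (primes n))%R else 0%R.

Definition farey_num_prod (n : nat) : nat :=
  \prod_(1 <= k < n.+1) \prod_(1 <= h < k.+1 | coprime h k) h.

From mathcomp Require Import all_boot all_order all_algebra.
Import Order.TTheory GRing.Theory Num.Theory.

(* Since ord_p N_n = sum over Farey numerators h of ord_p h, and ord_p h counts
   the b >= 1 with p^b | h, exchanging sums gives, for each b, the number of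
   pairs (h, k) with h = a p^b <= k <= n and gcd(h, k) = 1.  For fixed
   m = a p^b these k are counted by periodicity modulo m: each full period
   [m, 2m), ... contributes phi(m), and the partial period [1, d] with
   d = n mod m is counted by Moebius inversion.  Finally gcd(a p^b, k) = 1
   iff gcd(a p, k) = 1, so the inversion runs over the divisors of a p. *)

Lemma moebius_primeM q j : prime q -> 0 < j -> ~~ (q %| j) ->
  moebius (q * j) = (- moebius j)%R.
Proof.
move=> qP j0 nqj; have q0 := prime_gt0 qP.
have perm_primes : perm_eq (primes (q * j)) (q :: primes j).
  apply: uniq_perm; first exact: primes_uniq.
    by rewrite /= primes_uniq andbT mem_primes qP j0 nqj.
  by move=> x; rewrite primesM // in_cons primes_prime // inE.
rewrite /moebius muln_gt0 q0 j0 /= (perm_all _ perm_primes) (perm_size perm_primes) /=.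
rewrite lognM // logn_prime // eqxx (logn_coprime (_ : coprime q j)); last first.
  by rewrite prime_coprime.
have -> : all (fun x => logn x (q * j) == 1) (primes j) =
          all (fun x => logn x j == 1) (primes j).
  apply: eq_in_all => x; rewrite mem_primes => /and3P[xP _ xj].
  rewrite lognM // logn_prime //; case: (x =P q) => // exq.
  by rewrite -exq xj in nqj.
by case: (all _ _); rewrite ?oppr0 // exprS mulN1r.
Qed.

Lemma moebius_sqr_dvd q m : prime q -> q * q %| m -> moebius m = 0%R.
Proof.
move=> qP qqm; rewrite /moebius; case: ifP => // /andP[m0 /allP all_sqfree].
have qm : q \in primes m by rewrite mem_primes qP m0 (dvdn_trans (dvdn_mulr q _) qqm).
have : 2 <= logn q m by rewrite -pfactor_dvdn // expnS expn1.
by rewrite (eqP (all_sqfree q qm)).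
Qed.

Lemma sum_moebius_divisors g : 0 < g ->
  (\sum_(j <- divisors g) moebius j)%R = (g == 1)%:R%R.
Proof.
move=> g0; have [->|g_neq1] := eqVneq g 1; first by rewrite big_cons big_nil addr0.
have g1 : 1 < g by rewrite ltn_neqAle eq_sym g_neq1.
set q := pdiv g; have qP : prime q := pdiv_prime g1.
have q0 := prime_gt0 qP; have qg : q %| g := pdiv_dvd g.
set g' := g %/ q; have g'0 : 0 < g' by rewrite divn_gt0 // dvdn_leq.
have gE : g = q * g' by rewrite mulnC divnK.
have multiples : perm_eq [seq j <- divisors g | q %| j] [seq q * i | i <- divisors g'].
  apply: uniq_perm.
  - exact/filter_uniq/divisors_uniq.
  - by rewrite map_inj_uniq ?divisors_uniq // => x y /eqP; rewrite eqn_pmul2l // => /eqP.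
  move=> x; rewrite mem_filter -dvdn_divisors //.
  apply/andP/mapP => [[/dvdnP[i ->] xg]|[i]].
    exists i; last exact: mulnC.
    by rewrite -dvdn_divisors // -(dvdn_pmul2l q0) -gE mulnC.
  by rewrite -dvdn_divisors // gE => ig ->; rewrite dvdn_mulr // dvdn_pmul2l.
have non_multiples : [seq j <- divisors g | ~~ (q %| j)] = [seq i <- divisors g' | ~~ (q %| i)].
  apply: (irr_sorted_eq ltn_trans ltnn);
    [exact/(sorted_filter ltn_trans)/sorted_divisors_ltn..|move=> x].
  rewrite !mem_filter -!dvdn_divisors //; case qx: (q %| x) => //=.
  by rewrite gE mulnC Gauss_dvdl // coprime_sym prime_coprime // qx.
rewrite (bigID (fun j => q %| j)) /= -[X in (_ + X)%R]big_filter non_multiples big_filter.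
rewrite -big_filter (perm_big _ multiples) big_map (bigID (fun i => q %| i)) /=.
have sqr_terms : (\sum_(i <- divisors g' | (q %| i)%N) moebius (q * i)%N)%R = 0%R.
  by apply: big1 => i /dvdnP[t ->]; apply: (moebius_sqr_dvd _ _ qP); rewrite mulnCA dvdn_mull.
rewrite sqr_terms add0r -big_split /= big_seq_cond big1 // => i /andP[ig' nqi].
rewrite moebius_primeM ?addNr //.
by apply: (dvdn_gt0 g'0); rewrite dvdn_divisors.
Qed.

Definition coprime_count m n := \sum_(1 <= k < n.+1) coprime m k.

Lemma coprime_count_id m : 0 < m -> coprime_count m m = totient m.
Proof.
move=> m0; rewrite /coprime_count totient_count_coprime big_nat_recr // [in RHS]big_ltn //.
by rewrite /coprime gcdn0 gcdnn addnC.
Qed.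

Lemma coprime_count_addn m n : 0 < m ->
  coprime_count m (n + m) = coprime_count m n + totient m.
Proof.
move=> m0; elim: n => [|n IHn]; first by rewrite add0n coprime_count_id // /coprime_count big_geq.
rewrite /coprime_count addSn big_nat_recr //= [in RHS]big_nat_recr //=.
rewrite -/(coprime_count m (n + m)) -/(coprime_count m n) IHn.
by rewrite -addSn -coprime_modr modnDr coprime_modr addnAC.
Qed.

Lemma coprime_count_divn_mod m n : 0 < m ->
  coprime_count m n = n %/ m * totient m + coprime_count m (n %% m).
Proof.
move=> m0; rewrite {1}(divn_eq n m); elim: (n %/ m) => [|q IHq]; first by rewrite add0n.
by rewrite !mulSnr addnAC coprime_count_addn // IHq addnAC.
Qed.

Lemma count_coprime_geq m n : 1 < m -> m <= n ->
  \sum_(1 <= k < n.+1) ((m <= k) && coprime m k) =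
  totient m * (n %/ m - 1) + coprime_count m (n %% m).
Proof.
move=> m1 mn; have m0 : 0 < m by apply: ltnW.
have below_m : \sum_(1 <= k < m.+1) ((m <= k) && coprime m k) = 0.
  rewrite big_nat_recr //= big_nat_cond big1 => [|k /andP[/andP[_ km] _]].
    by rewrite leqnn /coprime gcdnn (gtn_eqF m1).
  by rewrite leqNgt km.
have above_m : \sum_(m.+1 <= k < n.+1) ((m <= k) && coprime m k) + totient m
               = coprime_count m n.
  rewrite -coprime_count_id // addnC /coprime_count [RHS](@big_cat_nat _ _ _ m.+1) //=.
  by congr (_ + _); apply: eq_big_nat => k /andP[mk _]; rewrite ltnW.
have n_ge_m : 0 < n %/ m by rewrite divn_gt0.
rewrite [LHS](@big_cat_nat _ _ _ m.+1) //= below_m add0n.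
move: above_m; rewrite coprime_count_divn_mod // mulnC -(prednK n_ge_m) mulnS subn1 /=.
by rewrite -addnA [_ + totient m]addnC => /addnI.
Qed.

Lemma coprime_count_pexpr a p b d : 0 < b ->
  coprime_count (a * p ^ b) d = coprime_count (a * p) d.
Proof.
by move=> b_gt0; apply: eq_bigr => k _; rewrite !coprimeMl coprime_pexpl.
Qed.

Lemma logn_prod (I : eqType) (r : seq I) (P : pred I) (F : I -> nat) p :
  (forall i, i \in r -> P i -> 0 < F i) ->
  logn p (\prod_(i <- r | P i) F i) = \sum_(i <- r | P i) logn p (F i).
Proof.
move=> F_gt0; rewrite big_seq_cond [RHS]big_seq_cond.
pose Q s m := (0 < m) && (s == logn p m).
suff /andP[_ /eqP->] : Q (\sum_(i <- r | (i \in r) && P i) logn p (F i))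
                        (\prod_(i <- r | (i \in r) && P i) F i) by [].
apply: (big_rec2 Q); first by rewrite /Q logn1.
move=> i s m /andP[ir Pi] /andP[m_gt0 /eqP->]; have Fi_gt0 := F_gt0 i ir Pi.
by rewrite /Q muln_gt0 Fi_gt0 m_gt0 lognM // eqxx.
Qed.

Lemma logn_count_dvd_trunc_log p n h : prime p -> 0 < h -> h <= n ->
  logn p h = \sum_(1 <= b < (trunc_log p n).+1) (p ^ b %| h).
Proof.
move=> pP h_gt0 hn.
have logn_le : logn p h <= trunc_log p n.
  apply: trunc_log_max; first exact: prime_gt1.
  by apply: leq_trans hn; apply: dvdn_leq => //; apply: pfactor_dvdnn.
rewrite (@big_cat_nat _ _ _ (logn p h).+1) //=.
rewrite (eq_big_nat _ _ (F2 := fun=> 1)) => [|b /andP[_ b_le]]; last first.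
  by rewrite pfactor_dvdn // -ltnS b_le.
rewrite [X in _ + X](eq_big_nat _ _ (F2 := fun=> 0)) => [|b /andP[b_gt _]]; last first.
  by rewrite pfactor_dvdn // leqNgt b_gt.
by rewrite !sum_nat_const_nat muln0 addn0 muln1 subn1.
Qed.

Lemma sum_nat_dvd q n (F : nat -> nat) : 0 < q ->
  \sum_(1 <= h < n.+1 | q %| h) F h = \sum_(1 <= a < (n %/ q).+1) F (a * q).
Proof.
move=> q_gt0; elim: n => [|n IHn]; first by rewrite div0n !big_geq.
rewrite big_mkcond big_nat_recr //= -big_mkcond IHn divnS //.
case qn: (q %| n.+1) => /=; last by rewrite addn0.
rewrite add1n [RHS]big_nat_recr //=; congr (_ + F _).
by rewrite -[(n %/ q).+1]/(true + n %/ q) -qn -divnS // divnK.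
Qed.

Lemma logn_farey_num_prod_pairs p n : prime p ->
  logn p (farey_num_prod n) =
  \sum_(1 <= b < (trunc_log p n).+1) \sum_(1 <= h < n.+1 | p ^ b %| h)
     \sum_(1 <= k < n.+1) ((h <= k) && coprime h k).
Proof.
move=> pP; set T := trunc_log p n.
have logn_row k : k <= n ->
    logn p (\prod_(1 <= h < k.+1 | coprime h k) h) =
    \sum_(1 <= h < n.+1) \sum_(1 <= b < T.+1) ((h <= k) && coprime h k) * (p ^ b %| h).
  move=> kn; rewrite logn_prod => [|h]; last by rewrite mem_index_iota => /andP[].
  rewrite [LHS](big_nat_widen _ _ n.+1) // big_mkcond; apply: eq_big_nat => h /andP[h_gt0 _].
  rewrite -big_distrr /= ltnS andbC; case: ifP => [/andP[hk _]|_]; last by rewrite mul0n.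
  by rewrite mul1n (@logn_count_dvd_trunc_log p n) // (leq_trans hk).
rewrite /farey_num_prod logn_prod => [|k _ _]; last first.
  by rewrite big_seq_cond prodn_cond_gt0 // => h /andP[]; rewrite mem_index_iota => /andP[].
under [LHS]eq_big_nat => k /andP[_ kn] do rewrite logn_row //.
rewrite exchange_big /=; under eq_bigr do rewrite exchange_big /=.
rewrite exchange_big /=; apply: eq_bigr => b _.
rewrite [RHS]big_mkcond; apply: eq_bigr => h _; rewrite -big_distrl /=.
by case: (p ^ b %| h); rewrite ?muln1 ?muln0.
Qed.

Local Open Scope ring_scope.

Lemma sum_moebius_divn r d : (0 < r)%N ->
  \sum_(j <- divisors r) moebius j * (d %/ j)%N%:Z =
  (coprime_count r d)%:Z.
Proof.
move=> r0; rewrite /coprime_count.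
have dvd_filter k : [seq j <- divisors r | (j %| k)%N] = divisors (gcdn r k).
  apply: (irr_sorted_eq ltn_trans ltnn);
    [exact/(sorted_filter ltn_trans)/sorted_divisors_ltn|exact: sorted_divisors_ltn|].
  by move=> j; rewrite mem_filter -!dvdn_divisors ?gcdn_gt0 ?r0 // dvdn_gcd andbC.
under [LHS]eq_bigr => j _ do rewrite divn_count_dvd -natz natr_sum mulr_sumr.
rewrite exchange_big -natz natr_sum; apply: eq_bigr => k _.
under eq_bigr do rewrite mulr_natr mulrb.
by rewrite -big_mkcond -big_filter dvd_filter sum_moebius_divisors ?gcdn_gt0 ?r0.
Qed.

Theorem lemma4p3 (p n : nat) : prime p -> (1 <= n)%N ->
  (logn p (farey_num_prod n))%:Z =
  \sum_(1 <= b < (trunc_log p n).+1)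
    \sum_(1 <= a < (n %/ (p ^ b)).+1)
      ( ((totient (a * p ^ b))%:Z * ((n %/ (a * p ^ b))%:Z - 1))
        + \sum_(j <- divisors (a * p)) moebius j *
             ((n %% (a * p ^ b)) %/ j)%N%:Z ).
Proof.
move=> pP _; have p_gt0 := prime_gt0 pP.
rewrite logn_farey_num_prod_pairs // -natz natr_sum; apply: eq_big_nat => b /andP[b_gt0 _].
have pb_gt1 : (1 < p ^ b)%N by rewrite -(exp1n b) ltn_exp2r -?lt0n ?prime_gt1.
rewrite sum_nat_dvd ?(ltnW pb_gt1) // natr_sum; apply: eq_big_nat => a /andP[a_gt0 a_le].
have apb_gt1 : (1 < a * p ^ b)%N by apply: leq_trans pb_gt1 _; rewrite leq_pmull.
have apb_le : (a * p ^ b <= n)%N by rewrite -leq_divRL ?(ltnW pb_gt1) // -ltnS.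
rewrite count_coprime_geq // coprime_count_pexpr // sum_moebius_divn ?muln_gt0 ?a_gt0 //.
by rewrite natrD natrM natrB ?divn_gt0 ?(ltnW apb_gt1) // !natz.
Qed.
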